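(* Let $q=p^k$ for a prime $p \neq 3$, and let $G=\mathrm{PSL}(2,q)$ be considered as a permutation group in its transitive action on the left cosets of a subgroup isomorphic to $\mathbb{Z}_3$. Then a non-canonical basic intersecting set in $G$ contains no point stabilizer as a proper subset.
   Context: For a permutation group $G$ on a finite set $V$, a subset $\mathcal{F}\subseteq G$ is intersecting if for all $g,h\in\mathcal{F}$ there is $v\in V$ with $g(v)=h(v)$. A canonical intersecting set is a coset $gG_v$ of a point stabilizer ($g\in G$, $v\in V$). A basic intersecting set is an intersecting set containing the identity. *)

From HB Require Import structures.
From mathcomp Require Import all_boot all_order all_algebra all_fingroup all_solvable.
Set Implicit Arguments. Unset Strict Implicit. Unset Printing Implicit Defensive.
Import GRing.Theory.

Local Open Scope group_scope.

Section PSL.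
Variable F : finFieldType.

Definition SL2 : {set {'GL_2[F]}} := [set x | determinant (GLval x) == 1%R].

Lemma SL2_group_set : group_set SL2.
Proof.
apply/group_setP; split; first by rewrite inE GL_1E det1.
move=> x y; rewrite !inE => /eqP dx /eqP dy.
by rewrite GL_MxE det_mulmx dx dy mulr1.
Qed.

Canonical SL2_group := Group SL2_group_set.

Definition PSLtype := coset_of 'Z(SL2_group).
Definition PSL2 : {group PSLtype} := (SL2_group / 'Z(SL2_group))%G.
End PSL.

Section Intersecting.
Variable gT : finGroupType.
Variables G H : {set gT}.

(* the points: left cosets xH, x in G; g acts by g(xH) = gxH *)
Definition points : {set {set gT}} := lcosets H G.

Definition pstab (v : {set gT}) : {set gT} := [set g in G | g *: v == v].

Definition intersecting (S : {set gT}) : Prop :=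
  S \subset G /\
  forall g h, g \in S -> h \in S -> exists2 v, v \in points & g *: v = h *: v.

Definition canonical_int (S : {set gT}) : Prop :=
  exists g v, [/\ g \in G, v \in points & S = g *: pstab v].

Definition basic_int (S : {set gT}) : Prop := intersecting S /\ 1 \in S.
End Intersecting.

(* Let S be intersecting, K = <b> the stabilizer of a point, K properly
   contained in S, and g in S but not in K.  For k in K, the elements g and
   k^-1 of S agree at some point, so k g fixes a point and lies in a conjugate
   of H: b, g, bg and b^2 g all have order 3.  An element of order 3 of
   PSL(2,q) lifts to a non-scalar matrix X of SL(2,q) with scalar cube; as
   X^3 = (t^2 - 1) X - t by Cayley-Hamilton (t = tr X), t^2 = 1.  For lifts A
   of g and B of b, the traces r = tr A, s = tr B, u = tr BA and
   tr B^2 A = s u - r all square to 1, whence 2 r s u = 1, 4 = 1 and the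
   characteristic is 3. *)

From mathcomp Require Import all_boot all_order all_algebra all_fingroup all_solvable.
From mathcomp Require Import finfield ring.
Set Implicit Arguments. Unset Strict Implicit. Unset Printing Implicit Defensive.

Import GRing.Theory.

Section Matrix2.
Local Open Scope ring_scope.
Variable R : comNzRingType.
Implicit Types M N : 'M[R]_2.

Lemma ord2P (i : 'I_2) : i = 0 \/ i = 1.
Proof. by case: i => [[|[|//]] ?]; [left | right]; apply: val_inj. Qed.

Lemma ord2E :
  (ord0 = 0 :> 'I_2) * (lift 0 ord0 = 1 :> 'I_2) * (lift 1 ord0 = 0 :> 'I_2).
Proof. by do !split; apply: val_inj. Qed.

Lemma det_mx2 M : \det M = M 0 0 * M 1 1 - M 0 1 * M 1 0.
Proof.
rewrite (expand_det_row _ 0) !big_ord_recl big_ord0 /cofactor !det_mx11 !mxE /=.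
by rewrite !ord2E /bump /=; ring.
Qed.

Lemma mxtrace2 M : \tr M = M 0 0 + M 1 1.
Proof. by rewrite /mxtrace !big_ord_recl big_ord0 !ord2E addr0. Qed.

Lemma mulmx2E M N i j : (M *m N) i j = M i 0 * N 0 j + M i 1 * N 1 j.
Proof. by rewrite !mxE !big_ord_recl big_ord0 !ord2E addr0. Qed.

Lemma mx2_Cayley_Hamilton M : M *m M = \tr M *: M - (\det M)%:M.
Proof.
apply/matrixP => i j; rewrite mulmx2E !mxE mxtrace2 det_mx2.
by have [-> | ->] := ord2P i; have [-> | ->] := ord2P j; rewrite /=; ring.
Qed.

Lemma mxtrace_sqr_mul M N :
  \tr (M *m M *m N) = \tr M * \tr (M *m N) - \det M * \tr N.
Proof.
by rewrite mx2_Cayley_Hamilton mulmxBl -scalemxAl mul_scalar_mx raddfB /= !linearZ.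
Qed.

Lemma det_transvection2 (i j : 'I_2) : i != j -> \det (1%:M + delta_mx i j) = 1 :> R.
Proof.
rewrite det_mx2 !mxE.
by have [-> | ->] := ord2P i; have [-> | ->] := ord2P j; rewrite //= => _; ring.
Qed.

Lemma comm_delta_mx2_scalar M :
  M *m delta_mx 0 1 = delta_mx 0 1 *m M -> M *m delta_mx 1 0 = delta_mx 1 0 *m M ->
  M = (M 0 0)%:M.
Proof.
move=> c01 c10.
have := congr1 (fun X : 'M_2 => X 0 1) c01; have := congr1 (fun X : 'M_2 => X 1 1) c01.
have := congr1 (fun X : 'M_2 => X 0 0) c10.
rewrite !mulmx2E !mxE /= !(mulr0, mulr1, mul0r, mul1r, add0r, addr0) => M01 M10 M11.
apply/matrixP => i j; rewrite !mxE.
by have [-> | ->] := ord2P i; have [-> | ->] := ord2P j.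
Qed.

Lemma three_eq0_of_sqr_eq1 (r s u : R) :
  r ^+ 2 = 1 -> s ^+ 2 = 1 -> u ^+ 2 = 1 -> (s * u - r) ^+ 2 = 1 -> 3%:R = 0 :> R.
Proof.
move=> r2 s2 u2 sur2.
have rsu : 2 * (r * s * u) = 1.
  transitivity (s ^+ 2 * u ^+ 2 + r ^+ 2 - (s * u - r) ^+ 2); first ring.
  by rewrite r2 s2 u2 sur2; ring.
transitivity ((2 * (r * s * u)) ^+ 2 - 1); last by rewrite rsu; ring.
transitivity (4 * (r ^+ 2 * s ^+ 2 * u ^+ 2) - 1); first by rewrite r2 s2 u2; ring.
ring.
Qed.

End Matrix2.

Section Field.
Local Open Scope ring_scope.

Lemma mx2_scalar_cube_trace (F : fieldType) (M : 'M[F]_2) (c : F) :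
  \det M = 1 -> M *m M *m M = c%:M -> ~~ is_scalar_mx M -> \tr M ^+ 2 = 1.
Proof.
move=> detM cubeM; apply: contraNeq => t2; apply/is_scalar_mxP.
set t := \tr M; have CH := mx2_Cayley_Hamilton M; rewrite detM -/t in CH.
have : M *m M *m M = (t ^+ 2 - 1) *: M - t%:M.
  rewrite CH mulmxBl -scalemxAl CH mul_scalar_mx scale1r.
  by apply/matrixP => i j; rewrite !mxE; ring.
rewrite cubeM => /esym/eqP; rewrite subr_eq -raddfD => /eqP eM.
exists ((t ^+ 2 - 1)^-1 * (c + t)).
by rewrite -scale_scalar_mx -eM scalerA mulVf ?subr_eq0 // scale1r.
Qed.

Lemma finField_natr3_neq0 (F : finFieldType) (p k : nat) :
  prime p -> p != 3%N -> #|F| = (p ^ k)%N -> 3%:R != 0 :> F.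
Proof.
move=> p_pr p_neq3 cardF; apply: contra p_neq3 => /eqP F3.
have pF := card_finPcharP cardF p_pr.
have : 3 \in [pchar F] by rewrite inE /= F3 eqxx.
by rewrite (GRing.pcharf_eq pF) inE eq_sym.
Qed.

End Field.

Section PSL2Order3.
Local Open Scope group_scope.
Variable F : finFieldType.
Local Notation Z := ('Z(SL2_group F)).
(* Typed through the finGroupType structure, products of elements elaborate
   along the same instance path as in the group lemmas; with the default path
   the conversions between the two are very slow. *)
Local Notation GL2 := (FinGroup.sort ({'GL_2[F]} : finGroupType)).
Implicit Types X Y : GL2.

Lemma SL2_transvection (i j : 'I_2) :
  i != j -> exists2 X : GL2, X \in SL2 F & GLval X = (1%:M + delta_mx i j)%R.
Proof.
move=> ij; have dX := det_transvection2 F ij.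
have uX : (1%:M + delta_mx i j : 'M[F]_(1.+1))%R \in unitmx.
  by rewrite unitmxE dX unitr1.
by exists (FinRing.Unit uX); rewrite // inE /= dX.
Qed.

Lemma SL2_scalar_center X c : X \in SL2 F -> GLval X = (c%:M)%R -> X \in Z.
Proof.
move=> SLX eX; apply/centerP; split=> // Y _; apply: val_inj.
by change (GLval (X * Y) = GLval (Y * X)); rewrite !GL_MxE eX scalar_mxC.
Qed.

Lemma SL2_center_scalar Y : Y \in Z -> is_scalar_mx (GLval Y).
Proof.
case/centerP=> _ cY; apply/is_scalar_mxP; exists (GLval Y 0%R 0%R).
have comm_delta (i j : 'I_2) :
    i != j -> (GLval Y *m delta_mx i j = delta_mx i j *m GLval Y)%R.
  move=> ij; have [X SLX eX] := SL2_transvection ij.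
  have := congr1 GLval (cY X SLX); rewrite !GL_MxE eX mulmxDr mulmxDl mulmx1 mul1mx.
  exact: addrI.
exact: comm_delta_mx2_scalar (comm_delta 0%R 1%R _) (comm_delta 1%R 0%R _).
Qed.

Lemma SL2_norm_center X : X \in SL2 F -> X \in 'N(Z).
Proof. exact/subsetP/normal_norm/center_normal. Qed.

Lemma PSL2_lift x : x \in PSL2 F -> exists2 X : GL2, X \in SL2 F & x = coset Z X.
Proof. by rewrite /PSL2 /= -imset_coset => /imsetP[X SLX ->]; exists X. Qed.

Lemma PSL2_order3_trace X :
  X \in SL2 F -> #[coset Z X] = 3 -> (\tr (GLval X) ^+ 2 = 1)%R.
Proof.
move=> SLX oX; have nZX := SL2_norm_center SLX.
have cubeZ : X ^+ 3 \in Z.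
  by apply: coset_idr; rewrite ?groupX // morphX // -oX expg_order.
have /is_scalar_mxP[c ec] := SL2_center_scalar cubeZ.
apply: (@mx2_scalar_cube_trace _ _ c).
- by move: SLX; rewrite inE => /eqP.
- have X3 : X ^+ 3 = X * X * X by rewrite expgSr expgS expg1.
  by rewrite -ec X3 !GL_MxE.
apply/is_scalar_mxP=> -[d eX]; move/eqP: oX; apply/negP.
by rewrite coset_id ?order1 // (SL2_scalar_center SLX eX).
Qed.

Lemma PSL2_order3_char3 b g : b \in PSL2 F -> g \in PSL2 F ->
  #[b] = 3 -> #[g] = 3 -> #[b * g] = 3 -> #[b * b * g] = 3 -> (3%:R = 0 :> F)%R.
Proof.
move=> /PSL2_lift[B SLB ->] /PSL2_lift[A SLA ->].
have SLBA := groupM SLB SLA; have SLBBA := groupM (groupM SLB SLB) SLA.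
rewrite -!morphM ?groupM ?SL2_norm_center // => oB oA oBA oBBA.
apply: (three_eq0_of_sqr_eq1 (PSL2_order3_trace SLA oA) (PSL2_order3_trace SLB oB)
         (PSL2_order3_trace SLBA oBA)).
have detB : (\det (GLval B) = 1)%R by move: SLB; rewrite inE => /eqP.
have := PSL2_order3_trace SLBBA oBBA.
by rewrite !GL_MxE mxtrace_sqr_mul detB mul1r.
Qed.

End PSL2Order3.

Section IntersectingCosetAction.
Local Open Scope group_scope.
Variables (gT : finGroupType) (G H : {group gT}).
Hypothesis sHG : H \subset G.

Lemma pstab_lcoset x : x \in G -> pstab G (x *: H) = H :^ x^-1.
Proof.
move=> xG; apply/setP=> g; rewrite inE mem_conjgV -lcosetM.
rewrite (sameP eqP lcoset_eqP) mem_lcoset -conjgE.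
apply: andb_idl => /(subsetP sHG) gxG.
by rewrite -(conjgK x g) groupJ ?groupV.
Qed.

Lemma intersecting_expn S n g y : intersecting G H S -> exponent H %| n ->
  g \in S -> y \in S -> (y^-1 * g) ^+ n = 1.
Proof.
move=> [sSG intS] eHn gS yS; have [v vP gyv] := intS g y gS yS.
have [x xG defv] := lcosetsP vP.
have : y^-1 * g \in pstab G v.
  rewrite inE groupM ?groupV ?(subsetP sSG) //=.
  by rewrite lcosetM gyv -lcosetM mulVg lcoset1.
have /exponentP expHx : exponent (H :^ x^-1) %| n by rewrite exponentJ.
by rewrite defv pstab_lcoset // => /expHx.
Qed.

Lemma intersecting_rcoset_expn S (K : {group gT}) n g : intersecting G H S ->
  exponent H %| n -> K \subset S -> g \in S -> {in K :* g, forall y, y ^+ n = 1}.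
Proof.
move=> intS eHn sKS gS _ /rcosetP[k kK ->].
by rewrite -[k]invgK (intersecting_expn intS) // (subsetP sKS) ?groupV.
Qed.

End IntersectingCosetAction.

Local Open Scope group_scope.

Theorem proposition2p13 (F : finFieldType) (p k : nat) :
  prime p -> p != 3 -> #|F| = (p ^ k)%N ->
  forall H : {group PSLtype F},
    H \subset PSL2 F -> H \isog Zp 3 ->
  forall S : {set PSLtype F},
    basic_int (PSL2 F) H S -> ~ canonical_int (PSL2 F) H S ->
  forall v, v \in points (PSL2 F) H -> ~~ (pstab (PSL2 F) v \proper S).
Proof.
move=> p_pr p_neq3 cardF H sHG isoH S [intS _] _ v vP.
apply/negP => /properP[sKS [g gS gNK]].
have [x xG defv] := lcosetsP vP; rewrite defv pstab_lcoset // in sKS gNK.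
set K := (H :^ x^-1)%G in sKS gNK.
have oH : #|H| = 3 by rewrite (card_isog isoH) card_Zp.
have oK : #|K| = 3 by rewrite cardJg.
have sKG : K \subset PSL2 F by rewrite conj_subG ?groupV.
have gG : g \in PSL2 F := subsetP intS.1 g gS.
have [b bK b1] : exists2 b, b \in K & b != 1 by apply/trivgPn; rewrite -cardG_gt1 oK.
have order3 y : y \in K :* g -> #[y] = 3.
  move=> Kgy; apply: nt_prime_order => //.
    apply: (intersecting_rcoset_expn sHG intS _ sKS gS Kgy).
    by rewrite -oH exponent_dvdn.
  by apply: contraNneq gNK => y1; move: Kgy; rewrite y1 mem_rcoset mul1g groupV.
apply: (negP (finField_natr3_neq0 p_pr p_neq3 cardF)); apply/eqP.
apply: (PSL2_order3_char3 (subsetP sKG b bK) gG); last 3 first.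
- by apply: order3; rewrite rcoset_refl.
- by apply: order3; rewrite mem_rcoset mulgK.
- by apply: order3; rewrite mem_rcoset mulgK groupM.
by apply: nt_prime_order; rewrite // -oK expg_cardG.
Qed.
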